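(* Let $\mathcal H=\mathcal H_A\otimes\mathcal H_B\otimes\mathcal H_C\otimes\mathcal H_D$ with finite-dimensional factors, and let $|\Psi\rangle=|\psi\rangle\otimes|\phi\rangle$, where $|\psi\rangle$ is a unit vector in the tensor product of three of the four factors and $|\phi\rangle$ is a unit vector in the remaining factor. Then for all $\alpha,\beta>0$, $\langle\Psi|\rho_{AB}^\alpha\rho_{BC}^\beta|\Psi\rangle>0$; in particular $\omega_{\alpha,\beta}(|\Psi\rangle)=1$.
   Context: $\rho_R$ is the reduced density operator of $|\Psi\rangle\langle\Psi|$ on the factors in $R$ (acting as identity on the others), $AB$ means $A\cup B$, etc. Powers are defined by spectral calculus with $0^\alpha=0$. $\omega_{\alpha,\beta}=\langle\rho_{AB}^\alpha\rho_{BC}^\beta\rangle/|\langle\rho_{AB}^\alpha\rho_{BC}^\beta\rangle|$. *)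

From HB Require Import structures.
From mathcomp Require Import all_boot all_order all_algebra.
From mathcomp Require Import boolp reals exp.
From mathcomp Require Import complex.
Set Implicit Arguments. Unset Strict Implicit. Unset Printing Implicit Defensive.
Import Order.TTheory GRing.Theory Num.Theory.
Local Open Scope ring_scope.

(* Basis index set of H = H_A (x) H_B (x) H_C (x) H_D, dim H_A = a, etc. *)
Definition idx (a b c d : nat) : finType := ('I_a * 'I_b * 'I_c * 'I_d)%type.

Definition adjmx (R : rcfType) m n (A : 'M[R[i]]_(m, n)) : 'M[R[i]]_(n, m) :=
  (map_mx Num.conj A)^T.

Definition unitarymx (R : rcfType) n (U : 'M[R[i]]_n) : Prop :=
  U *m adjmx U = 1%:M /\ adjmx U *m U = 1%:M.

Definition psd_spectral (R : rcfType) n (M : 'M[R[i]]_n)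
    (Ud : 'M[R[i]]_n * 'rV[R]_n) : Prop :=
  unitarymx Ud.1 /\ (forall j, 0 <= Ud.2 0 j) /\
  M = Ud.1 *m diag_mx (map_mx (fun x : R => Complex x 0) Ud.2) *m adjmx Ud.1.

(* Spectral calculus: M^alpha := U diag(d_j^alpha) U^*, with 0^alpha = 0
   for alpha <> 0 (powR convention).  Independent of the chosen
   decomposition; only used on positive semidefinite matrices (otherwise 0). *)
Definition mxpowR (R : realType) n (M : 'M[R[i]]_n) (alpha : R) : 'M[R[i]]_n :=
  match pselect (exists Ud, psd_spectral M Ud) with
  | left H => let Ud := projT1 (cid H) in
      Ud.1 *m diag_mx (map_mx (fun x : R => Complex (powR x alpha) 0) Ud.2) *m adjmx Ud.1
  | right _ => 0
  end.

Definition opmx (R : rcfType) (T : finType) (f : T -> T -> R[i]) : 'M[R[i]]_#|T| :=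
  \matrix_(i, j) f (enum_val i) (enum_val j).

Definition vecmx (R : rcfType) (T : finType) (v : T -> R[i]) : 'cV[R[i]]_#|T| :=
  \col_i v (enum_val i).

Definition expect (R : rcfType) (T : finType) (Psi : T -> R[i]) (X : 'M[R[i]]_#|T|)
  : R[i] := (adjmx (vecmx Psi) *m X *m vecmx Psi) 0 0.

(* rho_AB (x) 1_CD, where rho_AB = Tr_CD |Psi><Psi| *)
Definition rhoAB (R : rcfType) a b c d (Psi : idx a b c d -> R[i]) : 'M[R[i]]_#|idx a b c d| :=
  opmx (fun i j : idx a b c d =>
    let: (x, y, z, w) := i in let: (x', y', z', w') := j in
    ((z == z') && (w == w'))%:R *
    \sum_(z0 : 'I_c) \sum_(w0 : 'I_d) Psi (x, y, z0, w0) * Num.conj (Psi (x', y', z0, w0))).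

(* rho_BC (x) 1_AD, where rho_BC = Tr_AD |Psi><Psi| *)
Definition rhoBC (R : rcfType) a b c d (Psi : idx a b c d -> R[i]) : 'M[R[i]]_#|idx a b c d| :=
  opmx (fun i j : idx a b c d =>
    let: (x, y, z, w) := i in let: (x', y', z', w') := j in
    ((x == x') && (w == w'))%:R *
    \sum_(x0 : 'I_a) \sum_(w0 : 'I_d) Psi (x0, y, z, w0) * Num.conj (Psi (x0, y', z', w0))).

Definition omega (R : realType) a b c d (Psi : idx a b c d -> R[i]) (alpha beta : R) : R[i] :=
  let z := expect Psi (mxpowR (rhoAB Psi) alpha *m mxpowR (rhoBC Psi) beta) in
  z / `|z|.

Definition unit_vec (R : rcfType) (T : finType) (v : T -> R[i]) : Prop :=
  \sum_(t : T) `|v t| ^+ 2 = 1.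

Definition split_product (R : rcfType) a b c d (Psi : idx a b c d -> R[i]) : Prop :=
  (exists (psi : 'I_b * 'I_c * 'I_d -> R[i]) (phi : 'I_a -> R[i]),
     unit_vec psi /\ unit_vec phi /\
     forall x y z w, Psi (x, y, z, w) = psi (y, z, w) * phi x) \/
  (exists (psi : 'I_a * 'I_c * 'I_d -> R[i]) (phi : 'I_b -> R[i]),
     unit_vec psi /\ unit_vec phi /\
     forall x y z w, Psi (x, y, z, w) = psi (x, z, w) * phi y) \/
  (exists (psi : 'I_a * 'I_b * 'I_d -> R[i]) (phi : 'I_c -> R[i]),
     unit_vec psi /\ unit_vec phi /\
     forall x y z w, Psi (x, y, z, w) = psi (x, y, w) * phi z) \/
  (exists (psi : 'I_a * 'I_b * 'I_c -> R[i]) (phi : 'I_d -> R[i]),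
     unit_vec psi /\ unit_vec phi /\
     forall x y z w, Psi (x, y, z, w) = psi (x, y, z) * phi w).

From Pilot Require Import Defs.
From HB Require Import structures.
From mathcomp Require Import all_boot all_order all_algebra.
From mathcomp Require Import boolp reals exp.
From mathcomp Require Import complex spectral sesquilinear ring.
Set Implicit Arguments. Unset Strict Implicit. Unset Printing Implicit Defensive.
Import Order.TTheory GRing.Theory Num.Theory.
Local Open Scope ring_scope.

(* Each of [rho_AB (x) 1] and [rho_BC (x) 1] acts on |Psi> as the marginal of a
   single site does: on the three-site factor |psi>, complementary marginals act
   alike (Schmidt decomposition), while a marginal containing the site of |phi>
   is (marginal of psi) (x) |phi><phi|, whose projector fixes |Psi>.  The
   operators involved commute, so every polynomial in them, hence every power,
   acts alike on |Psi>.  The expectation thus becomes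
   <Phi| rho_X^alpha rho_Y^beta |Phi> for two distinct sites X, Y of a
   tripartite vector Phi; in the eigenbases of rho_X and rho_Y it is
   sum_(k,l,z) mu_k^alpha nu_l^beta |c_klz|^2, which is positive because c is
   nonzero and c_klz <> 0 forces mu_k > 0 and nu_l > 0. *)

Section Adjoint.
Variable R : rcfType.
Local Notation C := R[i].

Lemma adjmxE m n (A : 'M[C]_(m, n)) : adjmx A = (A ^t*)%sesqui.
Proof. by rewrite /adjmx map_trmx. Qed.

Lemma adjmxK m n (A : 'M[C]_(m, n)) : adjmx (adjmx A) = A.
Proof. by apply/matrixP=> i j; rewrite !mxE conjCK. Qed.

Lemma adjmx_mul m n p (A : 'M[C]_(m, n)) (B : 'M[C]_(n, p)) :
  adjmx (A *m B) = adjmx B *m adjmx A.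
Proof. by rewrite /adjmx map_mxM trmx_mul. Qed.

Lemma hermitian_psd_spectral n (M : 'M[C]_n) :
  adjmx M = M -> (forall u : 'cV_n, 0 <= (adjmx u *m M *m u) 0 0) ->
  exists Ud, psd_spectral M Ud.
Proof.
move=> hM pM.
have nM : M \is normalmx by apply/normalmxP; rewrite -adjmxE hM.
have eM := elimT (@orthomx_spectralP _ n M) nM.
set P := spectralmx M in eM; set sp := spectral_diag M in eM.
have uP : P \is unitarymx by apply: spectral_unitarymx.
have PP : P *m (P ^t*)%sesqui = 1%:M by apply/unitarymxP.
have PP' : (P ^t*)%sesqui *m P = 1%:M by apply: mulmx1C.
rewrite invmx_unitary // in eM.
set U := (P ^t*)%sesqui in PP PP' eM.
have aU : adjmx U = P by rewrite /U -adjmxE adjmxK.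
have ediag : P *m M *m U = diag_mx sp.
  by rewrite eM !mulmxA PP mul1mx -mulmxA PP mulmx1.
have sp_ge0 j : 0 <= sp 0 j.
  have := pM (adjmx (row j P)); rewrite adjmxK.
  suff -> : (row j P *m M *m adjmx (row j P)) 0 0 = sp 0 j by [].
  have := congr1 (fun X : 'M[C]_n => X j j) ediag.
  rewrite /= [diag_mx _ _ _]mxE eqxx mulr1n => <-.
  rewrite !mxE; apply: eq_bigr => k _; rewrite !mxE; congr (_ * _).
  by apply: eq_bigr => l _; rewrite !mxE.
exists (U, \row_j complex.Re (sp 0 j)); split; [|split] => /=.
- by split; rewrite aU.
- by move=> j; rewrite mxE; have := sp_ge0 j; rewrite lecE => /andP[].
- rewrite aU {1}eM; congr (_ *m diag_mx _ *m _); apply/matrixP => i j.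
  rewrite ord1 !mxE; have := sp_ge0 j; rewrite lecE /= => /andP[/eqP h _].
  by move: h; case: (sp 0 j) => x y /= ->.
Qed.

End Adjoint.

Lemma poly_interpolation (F : fieldType) (f : F -> F) (s : seq F) :
  exists p : {poly F}, forall x, x \in s -> p.[x] = f x.
Proof.
elim: s => [|y s [p hp]]; first by exists 0.
have [ys|yNs] := boolP (y \in s).
  by exists p => x; rewrite inE => /orP[/eqP->|]; apply: hp.
pose q := \prod_(z <- s) ('X - z%:P).
have qy : q.[y] != 0.
  rewrite horner_prod prodf_seq_neq0; apply/allP => z zs /=.
  by rewrite hornerXsubC subr_eq0; apply: contraNneq yNs => ->.
have qx x : x \in s -> q.[x] = 0.
  by move=> xs; rewrite horner_prod (big_rem x) //= hornerXsubC subrr mul0r.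
exists (p + ((f y - p.[y]) / q.[y]) *: q) => x; rewrite inE => /orP[/eqP->|xs].
  by rewrite hornerD hornerZ divfK // addrC subrK.
by rewrite hornerD hornerZ (qx x xs) mulr0 addr0 hp.
Qed.

Lemma complex_real_conj (R : rcfType) (r : R) : Num.conj (Complex r 0) = Complex r 0.
Proof. by apply/eqP; rewrite eq_complex /= oppr0 !eqxx. Qed.

Section SpectralCalculus.
Variable R : rcfType.
Local Notation C := R[i].
Implicit Types (n : nat) (f : R -> R).

Definition spectral_fun n (U : 'M[C]_n) (d : 'rV[R]_n) f : 'M[C]_n :=
  U *m diag_mx (map_mx (fun x : R => Complex (f x) 0) d) *m adjmx U.

Definition mxhorner n (p : {poly C}) (M : 'M[C]_n) : 'M[C]_n :=
  \sum_(k < size p) p`_k *: M ^+ k.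

Lemma adjmx_spectral_fun n (U : 'M[C]_n) d f : adjmx (spectral_fun U d f) = spectral_fun U d f.
Proof.
rewrite /spectral_fun !adjmx_mul adjmxK mulmxA; congr (_ *m _ *m _).
apply/matrixP => i j; rewrite !mxE; have [->|nij] := eqVneq i j.
  by rewrite mulr1n complex_real_conj.
by rewrite !mulr0n conjC0.
Qed.

Lemma spectral_funE n (U : 'M[C]_n) d f i j :
  spectral_fun U d f i j = \sum_k U i k * Complex (f (d 0 k)) 0 * Num.conj (U j k).
Proof. by rewrite mxE; apply: eq_bigr => k _; rewrite mul_mx_diag !mxE. Qed.

Lemma unitary_conj_exp n (U D : 'M[C]_n) k :
  Defs.unitarymx U -> (U *m D *m adjmx U) ^+ k = U *m D ^+ k *m adjmx U.
Proof.
case=> hU hU'; elim: k => [|k IH]; first by rewrite !expr0 -idmxE mulmx1 hU.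
rewrite !exprS IH -!mulmxE !mulmxA.
by rewrite -[U *m D *m adjmx U *m U]mulmxA hU' mulmx1.
Qed.

Lemma diag_mx_exp n (d : 'rV[C]_n) k :
  diag_mx d ^+ k = diag_mx (\row_j d 0 j ^+ k).
Proof.
elim: k => [|k IH]; first by apply/matrixP => i j; rewrite !mxE expr0.
rewrite exprS IH -mulmxE mulmx_diag; congr diag_mx.
by apply/rowP => j; rewrite !mxE exprS.
Qed.

Lemma mxhorner_spectral n (M U : 'M[C]_n) d p f :
  psd_spectral M (U, d) ->
  (forall j, p.[Complex (d 0 j) 0] = Complex (f (d 0 j)) 0) ->
  mxhorner p M = spectral_fun U d f.
Proof.
move=> [hU [_ /= ->]] hp; rewrite /mxhorner.
under eq_bigr => k _ do rewrite unitary_conj_exp // scalemxAl scalemxAr.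
rewrite -mulmx_suml -mulmx_sumr; congr (_ *m _ *m _).
apply/matrixP => i j; rewrite summxE !mxE -hp horner_coef -mulr_natr mulr_suml.
by apply: eq_bigr => k _; rewrite diag_mx_exp !mxE mulr_natr mulrnAr.
Qed.

Lemma exp_mulv_eq n (M K : 'M[C]_n) (v : 'cV_n) k :
  M *m v = K *m v -> M *m K = K *m M -> M ^+ k *m v = K ^+ k *m v.
Proof.
move=> hv hc; elim: k => [|k IH]; first by rewrite !expr0.
have cK : M *m K ^+ k = K ^+ k *m M := commrX k hc.
by rewrite exprS exprSr -!mulmxE -!mulmxA IH mulmxA cK -mulmxA hv.
Qed.

Lemma mxhorner_mulv_eq n (M K : 'M[C]_n) (v : 'cV_n) p :
  M *m v = K *m v -> M *m K = K *m M -> mxhorner p M *m v = mxhorner p K *m v.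
Proof.
move=> hv hc; rewrite /mxhorner !mulmx_suml; apply: eq_bigr => k _.
by rewrite -!scalemxAl (exp_mulv_eq k hv hc).
Qed.

End SpectralCalculus.

Section PowR.
Variable R : realType.
Local Notation C := R[i].

Lemma mxpowR_spectral n (M : 'M[C]_n) alpha : (exists Ud, psd_spectral M Ud) ->
  exists Ud, psd_spectral M Ud /\ mxpowR M alpha = spectral_fun Ud.1 Ud.2 (fun x => powR x alpha).
Proof.
rewrite /mxpowR; case: pselect => // h _.
by exists (projT1 (cid h)); split => //; case: (cid h).
Qed.

Lemma adjmx_mxpowR n (M : 'M[C]_n) alpha : adjmx (mxpowR M alpha) = mxpowR M alpha.
Proof.
rewrite /mxpowR; case: pselect => h; first exact: adjmx_spectral_fun.
by apply/matrixP => i j; rewrite !mxE conjC0.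
Qed.

End PowR.

Lemma big_pair (R : nmodType) (A B : finType) (F : A * B -> R) :
  \sum_t F t = \sum_a \sum_b F (a, b).
Proof. by rewrite pair_bigA; apply: eq_bigr => -[]. Qed.

Lemma big_delta_l (R : pzSemiRingType) (Z : finType) (a : Z) (F : Z -> R) :
  \sum_z (a == z)%:R * F z = F a.
Proof.
rewrite (bigD1 a) //= eqxx mul1r big1 ?addr0 // => z /negPf.
by rewrite eq_sym => ->; rewrite mul0r.
Qed.

Lemma big_delta_r (R : pzSemiRingType) (Z : finType) (a : Z) (F : Z -> R) :
  \sum_z F z * (z == a)%:R = F a.
Proof.
rewrite (bigD1 a) //= eqxx mulr1 big1 ?addr0 // => z /negPf ->.
by rewrite mulr0.
Qed.

Section Kernels.
Variables (R : rcfType) (T : finType).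
Local Notation C := R[i].
Implicit Types (f g : T -> T -> C) (u v : T -> C).

Definition kcomp f g : T -> T -> C := fun i j => \sum_k f i k * g k j.
Definition kapp f v : T -> C := fun i => \sum_k f i k * v k.

Lemma big_enum_valT (F : T -> C) : \sum_t F t = \sum_(k < #|T|) F (enum_val k).
Proof. exact: big_enum_val. Qed.

Lemma big_enum_rank (F : 'I_#|T| -> C) : \sum_k F k = \sum_t F (enum_rank t).
Proof. by rewrite big_enum_valT; under [RHS]eq_bigr do rewrite enum_valK. Qed.

Lemma opmx_mul f g : opmx f *m opmx g = opmx (kcomp f g).
Proof.
by apply/matrixP => i j; rewrite !mxE /kcomp big_enum_valT; apply: eq_bigr => k _; rewrite !mxE.
Qed.

Lemma opmx_vecmx f v : opmx f *m vecmx v = vecmx (kapp f v).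
Proof.
by apply/matrixP => i j; rewrite !mxE /kapp big_enum_valT; apply: eq_bigr => k _; rewrite !mxE.
Qed.

Lemma dotmx_vecmx u v : (adjmx (vecmx u) *m vecmx v) 0 0 = \sum_t Num.conj (u t) * v t.
Proof. by rewrite !mxE big_enum_valT; apply: eq_bigr => k _; rewrite !mxE. Qed.

Lemma eq_opmx f g : f =2 g -> opmx f = opmx g.
Proof. by move=> h; apply/matrixP => i j; rewrite !mxE h. Qed.

Lemma eq_vecmx u v : u =1 v -> vecmx u = vecmx v.
Proof. by move=> h; apply/matrixP => i j; rewrite !mxE h. Qed.

Lemma gram_psd_spectral (W : finType) (g : T -> W -> C) :
  exists Ud, psd_spectral (opmx (fun i j => \sum_r g i r * Num.conj (g j r))) Ud.
Proof.
apply: hermitian_psd_spectral.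
  apply/matrixP => i j; rewrite !mxE rmorph_sum; apply: eq_bigr => r _.
  by rewrite rmorphM /= conjCK mulrC.
move=> u; pose ug r := \sum_i Num.conj (u i 0) * g (enum_val i) r.
suff -> : (adjmx u *m opmx (fun i j => \sum_r g i r * Num.conj (g j r)) *m u) 0 0 =
          \sum_r ug r * Num.conj (ug r).
  by apply: sumr_ge0 => r _; rewrite mul_conjC_ge0.
rewrite mxE; under eq_bigr => j _ do rewrite mxE mulr_suml.
rewrite exchange_big /=; under [RHS]eq_bigr => r _ do rewrite rmorph_sum mulr_suml.
rewrite [RHS]exchange_big /=; apply: eq_bigr => i _.
under [RHS]eq_bigr => r _ do rewrite mulr_sumr.
rewrite [RHS]exchange_big /=; apply: eq_bigr => j _.
rewrite !mxE mulr_sumr mulr_suml; apply: eq_bigr => r _.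
by rewrite rmorphM /= conjCK; ring.
Qed.

(* [rho_S (x) 1], where [s i] and [q i] are the coordinates of [i] on the sites
   in [S] and on the traced-out sites, and [w (s i) r] is the amplitude at
   coordinates [(s i, r)]. *)
Definition marg_kernel (S Q W : finType) (s : T -> S) (q : T -> Q) (w : S -> W -> C) :
    T -> T -> C :=
  fun i j => (q i == q j)%:R * \sum_r w (s i) r * Num.conj (w (s j) r).

Lemma marg_kernel_psd_spectral (S Q W : finType) (s : T -> S) (q : T -> Q) (w : S -> W -> C) :
  exists Ud, psd_spectral (opmx (marg_kernel s q w)) Ud.
Proof.
pose g i (t : Q * W) := (q i == t.1)%:R * w (s i) t.2.
suff -> : marg_kernel s q w = fun i j => \sum_t g i t * Num.conj (g j t).
  exact: gram_psd_spectral.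
apply/funext => i; apply/funext => j.
rewrite /marg_kernel big_pair (bigD1 (q i)) //= [X in _ + X]big1 => [|q0 qi0]; last first.
  by apply: big1 => r _; rewrite /g /= eq_sym (negPf qi0) !mul0r.
rewrite addr0 mulr_sumr; apply: eq_bigr => r _.
by rewrite /g /= eqxx rmorphM /= rmorph_nat eq_sym; ring.
Qed.

End Kernels.

Section Split.
Variables (R : rcfType) (T X Y : finType).
Variables (pr : T -> X) (rs : T -> Y) (mk : X -> Y -> T).
Hypotheses (mkK1 : forall x y, pr (mk x y) = x) (mkK2 : forall x y, rs (mk x y) = y)
  (prK : forall t, mk (pr t) (rs t) = t).
Local Notation C := R[i].

Lemma big_site_split (V : nmodType) (F : T -> V) : \sum_t F t = \sum_x \sum_y F (mk x y).
Proof.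
rewrite pair_bigA /= (reindex (fun p : X * Y => mk p.1 p.2)) //.
by exists (fun t => (pr t, rs t)) => [[x y] _|t _] /=; rewrite ?mkK1 ?mkK2 ?prK.
Qed.

Definition liftk (f : X -> X -> C) : T -> T -> C :=
  fun i j => f (pr i) (pr j) * (rs i == rs j)%:R.

Definition liftmx (M : 'M[C]_#|X|) : 'M[C]_#|T| :=
  opmx (liftk (fun x x' => M (enum_rank x) (enum_rank x'))).

Lemma liftmx_opmx f : liftmx (opmx f) = opmx (liftk f).
Proof. by apply: eq_opmx => i j; rewrite /liftk mxE !enum_rankK. Qed.

Lemma kapp_liftk f v i : kapp (liftk f) v i = \sum_x f (pr i) x * v (mk x (rs i)).
Proof.
rewrite /kapp big_site_split; apply: eq_bigr => x _.
under eq_bigr => y _ do rewrite /liftk mkK1 mkK2 mulrAC mulrC.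
by rewrite big_delta_l.
Qed.

Lemma liftmx_mul A B : liftmx (A *m B) = liftmx A *m liftmx B.
Proof.
rewrite /liftmx opmx_mul; apply: eq_opmx => i j.
rewrite /kcomp big_site_split /liftk mxE big_enum_rank mulr_suml; apply: eq_bigr => x _.
under eq_bigr => y _ do rewrite mkK1 mkK2.
rewrite -(big_delta_l (rs i) (fun y => A (enum_rank (pr i)) (enum_rank x) *
  B (enum_rank x) (enum_rank (pr j)) * (y == rs j)%:R)).
by apply: eq_bigr => y _; have [<-|_] := eqVneq (rs i) y; rewrite /= ?mulr0n; ring.
Qed.

Lemma liftmx1 : liftmx 1%:M = 1%:M.
Proof.
apply/matrixP => i j; rewrite !mxE /liftk !mxE !(inj_eq enum_rank_inj).
have [->|ne] := eqVneq i j; first by rewrite !eqxx mulr1.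
have [e1|] := eqVneq (pr (enum_val i)) (pr (enum_val j)); last by rewrite mul0r.
have [e2|] := eqVneq (rs (enum_val i)) (rs (enum_val j)); last by rewrite mulr0.
by case/eqP: ne; apply: enum_val_inj; rewrite -[enum_val i]prK e1 e2 prK.
Qed.

Lemma liftmx_exp A k : liftmx (A ^+ k) = liftmx A ^+ k.
Proof.
elim: k => [|k IH]; first by rewrite !expr0 -!idmxE liftmx1.
by rewrite !exprS -!mulmxE liftmx_mul IH.
Qed.

Lemma liftmx_mxhorner p A : liftmx (mxhorner p A) = mxhorner p (liftmx A).
Proof.
apply/matrixP => i j; rewrite /mxhorner !mxE /liftk !summxE mulr_suml.
by apply: eq_bigr => k _; rewrite -liftmx_exp !mxE /liftk mulrA.
Qed.

Lemma liftk_comm (F f : X -> X -> C) (K' : Y -> Y -> C) (K : T -> T -> C) :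
  (forall i j, K i j = F (pr i) (pr j) * K' (rs i) (rs j)) ->
  (forall u w, \sum_x F u x * f x w = \sum_x f u x * F x w) ->
  opmx K *m opmx (liftk f) = opmx (liftk f) *m opmx K.
Proof.
move=> hK hc; rewrite !opmx_mul; apply: eq_opmx => i j; rewrite /kcomp !big_site_split.
transitivity (\sum_x F (pr i) x * f x (pr j) * K' (rs i) (rs j)).
  apply: eq_bigr => x _; under eq_bigr => y _ do rewrite hK /liftk mkK1 mkK2.
  rewrite -(big_delta_l (rs j) (fun y => F (pr i) x * f x (pr j) * K' (rs i) y)).
  by apply: eq_bigr => y _; rewrite [rs j == y]eq_sym; ring.
rewrite -!mulr_suml hc mulr_suml; apply: eq_bigr => x _.
under eq_bigr => y _ do rewrite hK /liftk mkK1 mkK2.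
rewrite -(big_delta_l (rs i) (fun y => f (pr i) x * F x (pr j) * K' y (rs j))).
by apply: eq_bigr => y _; ring.
Qed.

Lemma kapp_liftk_tensor (F : X -> X -> C) (K' : Y -> Y -> C) (K : T -> T -> C) (v : T -> C) :
  (forall i j, K i j = F (pr i) (pr j) * K' (rs i) (rs j)) ->
  (forall x r, \sum_r' K' r r' * v (mk x r') = v (mk x r)) ->
  kapp K v =1 kapp (liftk F) v.
Proof.
move=> hK hP i; rewrite kapp_liftk /kapp big_site_split.
apply: eq_bigr => x _; rewrite -hP mulr_sumr; apply: eq_bigr => r _.
by rewrite hK mkK1 mkK2 mulrA.
Qed.

Lemma kapp_delta_tensor (K' : Y -> Y -> C) (K : T -> T -> C) (v : T -> C) :
  (forall i j, K i j = (pr i == pr j)%:R * K' (rs i) (rs j)) ->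
  kapp K v =1 fun i => \sum_r K' (rs i) r * v (mk (pr i) r).
Proof.
move=> hK i; rewrite /kapp big_site_split.
under eq_bigr => x _ do under eq_bigr => y _ do rewrite hK mkK1 mkK2 -mulrA.
by under eq_bigr => x _ do rewrite -mulr_sumr; rewrite big_delta_l.
Qed.

End Split.

Lemma mxpowR_mulv_liftmx (R : realType) (T X Y : finType)
    (pr : T -> X) (rs : T -> Y) (mk : X -> Y -> T)
    (mkK1 : forall x y, pr (mk x y) = x) (mkK2 : forall x y, rs (mk x y) = y)
    (prK : forall t, mk (pr t) (rs t) = t)
    (M : 'M[R[i]]_#|T|) (rho U : 'M[R[i]]_#|X|) mu (v : 'cV[R[i]]_#|T|) alpha :
  (exists Ud, psd_spectral M Ud) -> psd_spectral rho (U, mu) ->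
  M *m v = liftmx pr rs rho *m v -> M *m liftmx pr rs rho = liftmx pr rs rho *m M ->
  mxpowR M alpha *m v = liftmx pr rs (spectral_fun U mu (fun x => powR x alpha)) *m v.
Proof.
move=> hM hrho hv hc; have [[U1 d1] [hM1 ->]] := mxpowR_spectral alpha hM.
(* One polynomial reproduces [powR ^~ alpha] on both spectra *)
have [p hp] := poly_interpolation (fun z : R[i] => Complex (powR (complex.Re z) alpha) 0)
  ([seq Complex (d1 0 j) 0 | j <- enum 'I_#|T|] ++ [seq Complex (mu 0 j) 0 | j <- enum 'I_#|X|]).
rewrite -(mxhorner_spectral (p := p) hM1); last first.
  by move=> j; rewrite hp // mem_cat map_f ?mem_enum.
rewrite (mxhorner_mulv_eq _ hv hc) -(liftmx_mxhorner mkK1 mkK2 prK).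
rewrite (mxhorner_spectral (f := fun x => powR x alpha) hrho) // => j.
by rewrite hp // mem_cat orbC map_f ?mem_enum.
Qed.

Lemma sum_mul_conj_eq0 (R : rcfType) (A B : finType) (F : A -> B -> R[i]) :
  \sum_a \sum_b F a b * Num.conj (F a b) = 0 -> forall a b, F a b = 0.
Proof.
move=> h a b; have ge0 a' b' : 0 <= F a' b' * Num.conj (F a' b') by exact: mul_conjC_ge0.
have /psumr_eq0P ha := h.
have /psumr_eq0P := ha (fun a' _ => sumr_ge0 _ (fun b' _ => ge0 a' b')) a isT.
by move=> /(_ (fun b' _ => ge0 a b') b isT) /eqP; rewrite mul_conjC_eq0 => /eqP.
Qed.

Lemma big_swap22 (R : nmodType) (A B D E : finType) (F : A -> B -> D -> E -> R) :
  \sum_a \sum_b \sum_d \sum_e F a b d e = \sum_d \sum_e \sum_a \sum_b F a b d e.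
Proof.
under eq_bigr => a _ do rewrite exchange_big.
rewrite exchange_big; apply: eq_bigr => d _.
by under eq_bigr => a _ do rewrite exchange_big; rewrite exchange_big.
Qed.

Lemma adjmx_mulmx_entry (R : rcfType) n (A M : 'M[R[i]]_n) k :
  (adjmx A *m M *m A) k k = \sum_i \sum_j A j k * Num.conj (A i k) * M i j.
Proof.
rewrite mxE; under eq_bigr => j _ do rewrite mxE mulr_suml.
rewrite exchange_big /=; apply: eq_bigr => i _; apply: eq_bigr => j _.
by rewrite !mxE mulrC mulrA.
Qed.

Section Marginal.
Variables (R : rcfType) (X Y Z : finType) (Phi : X -> Y -> Z -> R[i]).
Local Notation C := R[i].

Definition marg1 : 'M[C]_#|X| :=
  opmx (fun x x' => \sum_y \sum_z Phi x y z * Num.conj (Phi x' y z)).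

Lemma marg1_psd_spectral : exists Ud, psd_spectral marg1 Ud.
Proof.
have [Ud hU] := gram_psd_spectral (fun x (r : Y * Z) => Phi x r.1 r.2).
by exists Ud; move: hU; congr (psd_spectral _ _); apply: eq_opmx => x x'; rewrite big_pair.
Qed.

Variables (U : 'M[C]_#|X|) (mu : 'rV[R]_#|X|).
Hypothesis hU : psd_spectral marg1 (U, mu).

(* The coordinates of [Phi] along the [k]-th eigenvector of its marginal. *)
Definition eigcoef k y z := \sum_x Num.conj (U (enum_rank x) k) * Phi x y z.

Lemma marg1_eigval k :
  Complex (mu 0 k) 0 = \sum_y \sum_z eigcoef k y z * Num.conj (eigcoef k y z).
Proof.
case: hU => [[_ hU'] [_ /= eM]].
have <- : (adjmx U *m marg1 *m U) k k = Complex (mu 0 k) 0.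
  by rewrite eM !mulmxA hU' mul1mx -mulmxA hU' mulmx1 !mxE eqxx mulr1n.
rewrite adjmx_mulmx_entry; under [LHS]eq_bigr => i _ do rewrite big_enum_rank.
rewrite [LHS]big_enum_rank /eigcoef.
under [RHS]eq_bigr => y _ do under eq_bigr => z _ do
  (rewrite rmorph_sum mulr_suml; under eq_bigr => x _ do rewrite mulr_sumr).
rewrite [RHS]big_swap22; apply: eq_bigr => x _; apply: eq_bigr => x' _.
rewrite !mxE !enum_rankK mulr_sumr; apply: eq_bigr => y _.
rewrite mulr_sumr; apply: eq_bigr => z _.
by rewrite rmorphM /= conjCK; ring.
Qed.

Lemma eigcoef_eq0 k y z : mu 0 k = 0 -> eigcoef k y z = 0.
Proof.
move=> mu0; apply: (sum_mul_conj_eq0 (F := eigcoef k)).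
by rewrite -marg1_eigval mu0.
Qed.

End Marginal.

Lemma unitary_rows_dot (R : rcfType) n (W : 'M[R[i]]_n) (T : finType) (e : T -> 'I_n)
    (x x' : T) :
  W *m adjmx W = 1%:M -> injective e ->
  \sum_k W (e x) k * Num.conj (W (e x') k) = (x == x')%:R.
Proof.
move=> hW ie; have := congr1 (fun M : 'M[R[i]]_n => M (e x) (e x')) hW.
by rewrite /= !mxE (inj_eq ie) => <-; apply: eq_bigr => k _; rewrite !mxE.
Qed.

Lemma spectral_fun_apply (R : rcfType) (W : finType) (Psi : W -> R[i]) n (F : W -> 'I_n)
    (Q : 'M[R[i]]_n) d (h : R -> R) w :
  \sum_w' spectral_fun Q d h (F w) (F w') * Psi w' =
  \sum_k Q (F w) k * Complex (h (d 0 k)) 0 * \sum_w' Num.conj (Q (F w') k) * Psi w'.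
Proof.
under eq_bigr => w' _ do rewrite spectral_funE mulr_suml.
rewrite exchange_big /=; apply: eq_bigr => k _.
by rewrite mulr_sumr; apply: eq_bigr => w' _; ring.
Qed.

Lemma psumr_gt0 (R : numDomainType) (I : finType) (F : I -> R) i0 :
  (forall i, 0 <= F i) -> 0 < F i0 -> 0 < \sum_i F i.
Proof.
move=> F_ge0 Fi0; rewrite (bigD1 i0) //=.
by rewrite ltr_wpDr // sumr_ge0.
Qed.

Section Positivity.
Variables (R : realType) (X Y Z : finType) (Phi : X -> Y -> Z -> R[i]).
Local Notation C := R[i].
Local Notation PhiT := (fun y x z => Phi x y z).
Hypothesis Phi_unit : \sum_x \sum_y \sum_z Phi x y z * Num.conj (Phi x y z) = 1.
Variables (U : 'M[C]_#|X|) (mu : 'rV[R]_#|X|) (V : 'M[C]_#|Y|) (nu : 'rV[R]_#|Y|).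
Hypotheses (hU : psd_spectral (marg1 Phi) (U, mu)) (hV : psd_spectral (marg1 PhiT) (V, nu)).
Variables (alpha beta : R).

Local Notation u x k := (U (enum_rank x) k).
Local Notation v y l := (V (enum_rank y) l).
Local Notation f k := (Complex (powR (mu 0 k) alpha) 0).
Local Notation g l := (Complex (powR (nu 0 l) beta) 0).

(* The coefficients [c_klz] of [Phi] in the product of the two eigenbases. *)
Definition bicoef k l z := \sum_y Num.conj (v y l) * eigcoef Phi U k y z.

Lemma bicoefE k l z : bicoef k l z = \sum_x Num.conj (u x k) * eigcoef PhiT V l x z.
Proof.
rewrite /bicoef /eigcoef; under eq_bigr => y _ do rewrite mulr_sumr.
under [RHS]eq_bigr => x _ do rewrite mulr_sumr.
by rewrite exchange_big /=; apply: eq_bigr => x _; apply: eq_bigr => y _; ring.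
Qed.

Lemma bicoef_sqr k l z : bicoef k l z * Num.conj (bicoef k l z) =
  \sum_x \sum_y (Num.conj (u x k) * eigcoef PhiT V l x z) *
                (v y l * Num.conj (eigcoef Phi U k y z)).
Proof.
rewrite {2}/bicoef bicoefE rmorph_sum mulr_suml; apply: eq_bigr => x _.
by rewrite mulr_sumr; apply: eq_bigr => y _; rewrite rmorphM /= conjCK.
Qed.

Definition powR_expect := \sum_x \sum_y \sum_z
  Num.conj (\sum_x' spectral_fun U mu (fun r => powR r alpha) (enum_rank x) (enum_rank x') *
            Phi x' y z) *
  (\sum_y' spectral_fun V nu (fun r => powR r beta) (enum_rank y) (enum_rank y') * Phi x y' z).

Lemma powR_expectE :
  powR_expect = \sum_k \sum_l \sum_z (f k * g l) * (bicoef k l z * Num.conj (bicoef k l z)).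
Proof.
rewrite /powR_expect.
under eq_bigr => x _ do under eq_bigr => y _ do under eq_bigr => z _ do
  (rewrite (spectral_fun_apply (fun x' => Phi x' y z)) (spectral_fun_apply (Phi x ^~ z));
   rewrite rmorph_sum mulr_suml; under eq_bigr => k _ do rewrite mulr_sumr).
under eq_bigr => x _ do under eq_bigr => y _ do
  (rewrite exchange_big /=; under eq_bigr => k _ do rewrite exchange_big /=).
rewrite big_swap22; apply: eq_bigr => k _; apply: eq_bigr => l _.
under eq_bigr => x _ do rewrite exchange_big /=.
rewrite exchange_big /=; apply: eq_bigr => z _.
rewrite bicoef_sqr mulr_sumr; apply: eq_bigr => x _.
rewrite mulr_sumr; apply: eq_bigr => y _.
by rewrite /eigcoef /= !rmorphM /= !complex_real_conj; ring.
Qed.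

Lemma bicoef_eq0 k l z : mu 0 k = 0 \/ nu 0 l = 0 -> bicoef k l z = 0.
Proof.
case=> h0; first by rewrite /bicoef big1 // => y _; rewrite (eigcoef_eq0 hU) ?mulr0.
by rewrite bicoefE big1 // => x _; rewrite (eigcoef_eq0 hV) ?mulr0.
Qed.

Lemma bicoef_expansion x y z : Phi x y z = \sum_k \sum_l u x k * v y l * bicoef k l z.
Proof.
case: hU => [[uU _] _]; case: hV => [[uV _] _].
transitivity (\sum_x' (x == x')%:R * \sum_y' (y == y')%:R * Phi x' y' z).
  by rewrite big_delta_l big_delta_l.
under [RHS]eq_bigr => k _ do under eq_bigr => l _ do
  (rewrite bicoefE mulr_sumr; under eq_bigr => x' _ do rewrite mulr_sumr mulr_sumr).
rewrite [RHS]big_swap22; apply: eq_bigr => x' _; rewrite mulr_sumr; apply: eq_bigr => y' _.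
rewrite -(unitary_rows_dot x x' uU enum_rank_inj) -(unitary_rows_dot y y' uV enum_rank_inj).
rewrite mulr_suml; apply: eq_bigr => k _.
by rewrite mulr_suml mulr_sumr; apply: eq_bigr => l _; ring.
Qed.

Lemma bicoef_neq0 : exists k l z, bicoef k l z != 0.
Proof.
have [//|hn] := pselect (exists k l z, bicoef k l z != 0).
have h0 k l z : bicoef k l z = 0.
  by apply/eqP; apply: contra_notT hn => ?; exists k, l, z.
suff : (1 : C) = 0 by move/eqP; rewrite oner_eq0.
rewrite -Phi_unit; apply: big1 => x _; apply: big1 => y _; apply: big1 => z _.
by rewrite bicoef_expansion big1 ?mul0r // => k _; rewrite big1 // => l _; rewrite h0 mulr0.
Qed.

Lemma powR_expect_gt0 : 0 < powR_expect.
Proof.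
have [k0 [l0 [z0 c0]]] := bicoef_neq0.
have f_ge0 k : 0 <= f k by rewrite lecE /= eqxx powR_ge0.
have g_ge0 l : 0 <= g l by rewrite lecE /= eqxx powR_ge0.
have term_ge0 k l z : 0 <= (f k * g l) * (bicoef k l z * Num.conj (bicoef k l z)).
  by apply: mulr_ge0; [exact: mulr_ge0|exact: mul_conjC_ge0].
have mu0 : 0 < mu 0 k0.
  case: hU => _ [hm _]; rewrite lt_def hm andbT.
  by apply: contraNneq c0 => h; rewrite bicoef_eq0 //; left.
have nu0 : 0 < nu 0 l0.
  case: hV => _ [hm _]; rewrite lt_def hm andbT.
  by apply: contraNneq c0 => h; rewrite bicoef_eq0 //; right.
rewrite powR_expectE; apply: (psumr_gt0 (i0 := k0)) => [k|].
  by apply: sumr_ge0 => l _; apply: sumr_ge0.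
apply: (psumr_gt0 (i0 := l0)) => [l|]; first exact: sumr_ge0.
apply: (psumr_gt0 (i0 := z0)) => //; rewrite mulr_gt0 ?mul_conjC_gt0 //.
by rewrite mulr_gt0 // ltcE /= eqxx powR_gt0.
Qed.

End Positivity.

Section Tripartition.
Variables (T X Y Z : finType) (e : X -> Y -> Z -> T) (e' : T -> X * Y * Z).
Hypotheses (eK : forall x y z, e' (e x y z) = (x, y, z))
  (e'K : forall t, e (e' t).1.1 (e' t).1.2 (e' t).2 = t).

Definition site1 t := (e' t).1.1.
Definition rest1 t := ((e' t).1.2, (e' t).2).
Definition glue1 x (r : Y * Z) := e x r.1 r.2.

(* Exchanging the roles of [X] and [Y], so that lemmas about the first site
   apply to the second. *)
Definition swap12 : Y -> X -> Z -> T := fun y x z => e x y z.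
Definition swap12' t : Y * X * Z := ((e' t).1.2, (e' t).1.1, (e' t).2).

Lemma site1_glue x r : site1 (glue1 x r) = x.
Proof. by rewrite /site1 /glue1 eK. Qed.

Lemma rest1_glue x r : rest1 (glue1 x r) = r.
Proof. by rewrite /rest1 /glue1 eK; case: r. Qed.

Lemma glue1K t : glue1 (site1 t) (rest1 t) = t.
Proof. exact: e'K. Qed.

Lemma swap12K y x z : swap12' (swap12 y x z) = (y, x, z).
Proof. by rewrite /swap12' /swap12 eK. Qed.

Lemma swap12'K t : swap12 (swap12' t).1.1 (swap12' t).1.2 (swap12' t).2 = t.
Proof. exact: e'K. Qed.

Lemma big_tripartition (R : nmodType) (F : T -> R) :
  \sum_t F t = \sum_x \sum_y \sum_z F (e x y z).
Proof.
rewrite (big_site_split site1_glue rest1_glue glue1K); apply: eq_bigr => x _.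
by rewrite big_pair.
Qed.

End Tripartition.

Section ProductState.
Variables (R : rcfType) (T X Y F G : finType).
Variables (e : X -> Y -> F * G -> T) (e' : T -> X * Y * (F * G)).
Hypotheses (eK : forall x y z, e' (e x y z) = (x, y, z))
  (e'K : forall t, e (e' t).1.1 (e' t).1.2 (e' t).2 = t).
Local Notation C := R[i].
Variables (Psi : T -> C) (psi : X -> Y -> G -> C) (phi : F -> C).
Hypotheses (phi_unit : \sum_f phi f * Num.conj (phi f) = 1)
  (Psi_prod : forall x y f g, Psi (e x y (f, g)) = psi x y g * phi f).

Local Notation Phi := (fun x y z => Psi (e x y z)).
Local Notation margk := (fun x x' => \sum_y \sum_z Phi x y z * Num.conj (Phi x' y z)).
Local Notation lift := (liftmx (site1 e') (rest1 e')).

Definition margXF : T -> T -> C :=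
  marg_kernel (fun i => ((e' i).1.1, (e' i).2.1)) (fun i => ((e' i).1.2, (e' i).2.2))
    (fun s (r : Y * G) => Psi (e s.1 r.1 (s.2, r.2))).
Definition margYG : T -> T -> C :=
  marg_kernel (fun i => ((e' i).1.2, (e' i).2.2)) (fun i => ((e' i).1.1, (e' i).2.1))
    (fun s (r : X * F) => Psi (e r.1 s.1 (r.2, s.2))).

Lemma big_phi (a b : C) : \sum_f a * phi f * Num.conj (b * phi f) = a * Num.conj b.
Proof.
rewrite -[RHS]mulr1 -phi_unit mulr_sumr; apply: eq_bigr => f _.
by rewrite rmorphM /=; ring.
Qed.

Lemma margk_prod x x' : margk x x' = \sum_y \sum_g psi x y g * Num.conj (psi x' y g).
Proof.
apply: eq_bigr => y _; rewrite big_pair exchange_big /=; apply: eq_bigr => g _.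
by under eq_bigr => f _ do rewrite !Psi_prod; rewrite big_phi.
Qed.

Definition projk (r r' : Y * (F * G)) : C :=
  (r.1 == r'.1)%:R * (r.2.2 == r'.2.2)%:R * (phi r.2.1 * Num.conj (phi r'.2.1)).

Lemma margXF_factor i j :
  margXF i j = margk (site1 e' i) (site1 e' j) * projk (rest1 e' i) (rest1 e' j).
Proof.
rewrite /margXF /marg_kernel /site1 /rest1 /projk.
case: (e' i) => [[x y] [f g]]; case: (e' j) => [[x' y'] [f' g']] /=.
rewrite margk_prod xpair_eqE -mulnb natrM big_pair /=.
transitivity ((y == y')%:R * (g == g')%:R * ((phi f * Num.conj (phi f')) *
  \sum_y0 \sum_g0 psi x y0 g0 * Num.conj (psi x' y0 g0))); last by ring.
congr (_ * _); rewrite mulr_sumr; apply: eq_bigr => y0 _.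
rewrite mulr_sumr; apply: eq_bigr => g0 _.
by rewrite !Psi_prod rmorphM /=; ring.
Qed.

Lemma projk_fixes x r : \sum_r' projk r r' * Psi (glue1 e x r') = Psi (glue1 e x r).
Proof.
case: r => y [f g]; rewrite big_pair /=.
under eq_bigr => y' _ do rewrite big_pair exchange_big /=.
rewrite (bigD1 y) //= [X in _ + X]big1 ?addr0 => [|y' ny]; last first.
  by apply: big1 => g' _; apply: big1 => f' _; rewrite /projk /= eq_sym (negPf ny) !mul0r.
rewrite (bigD1 g) //= [X in _ + X]big1 ?addr0 => [|g' ng]; last first.
  by apply: big1 => f' _; rewrite /projk /= eq_sym (negPf ng) mulr0 !mul0r.
rewrite /glue1 /= Psi_prod -[RHS]mulr1 -phi_unit mulr_sumr; apply: eq_bigr => f' _.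
by rewrite /projk /= !eqxx Psi_prod !mul1r; ring.
Qed.

Lemma margXF_mulv : opmx margXF *m vecmx Psi = lift (opmx margk) *m vecmx Psi.
Proof.
rewrite liftmx_opmx !opmx_vecmx; apply: eq_vecmx.
exact: (kapp_liftk_tensor (site1_glue eK) (rest1_glue eK) (glue1K e'K) margXF_factor projk_fixes).
Qed.

Lemma margXF_comm : opmx margXF *m lift (opmx margk) = lift (opmx margk) *m opmx margXF.
Proof.
rewrite liftmx_opmx.
exact: (liftk_comm (site1_glue eK) (rest1_glue eK) (glue1K e'K) margXF_factor).
Qed.

Definition restYG (r r' : Y * (F * G)) : C := (r.2.1 == r'.2.1)%:R *
  \sum_(s : X * F) Psi (e s.1 r.1 (s.2, r.2.2)) * Num.conj (Psi (e s.1 r'.1 (s.2, r'.2.2))).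

Lemma margYG_factor i j :
  margYG i j = (site1 e' i == site1 e' j)%:R * restYG (rest1 e' i) (rest1 e' j).
Proof.
rewrite /margYG /marg_kernel /site1 /rest1 /restYG.
case: (e' i) => [[x y] [f g]]; case: (e' j) => [[x' y'] [f' g']] /=.
by rewrite xpair_eqE -mulnb natrM mulrA.
Qed.

Lemma restYG_prod y y' f f' g g' : restYG (y, (f, g)) (y', (f', g')) =
  (f == f')%:R * \sum_x psi x y g * Num.conj (psi x y' g').
Proof.
rewrite /restYG /= big_pair; congr (_ * _); apply: eq_bigr => x _.
by under eq_bigr => f0 _ do rewrite !Psi_prod /=; rewrite big_phi.
Qed.

Lemma margYG_mulv : opmx margYG *m vecmx Psi = lift (opmx margk) *m vecmx Psi.
Proof.
rewrite liftmx_opmx !opmx_vecmx; apply: eq_vecmx => i.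
rewrite (kapp_delta_tensor (site1_glue eK) (rest1_glue eK) (glue1K e'K) Psi margYG_factor).
rewrite (kapp_liftk (site1_glue eK) (rest1_glue eK) (glue1K e'K)).
move: (site1 e' i) (rest1 e' i) => x [y [f g]].
rewrite big_pair /=; under eq_bigr => y' _ do
  (rewrite big_pair /=; under eq_bigr => f' _ do
     (under eq_bigr => g' _ do rewrite restYG_prod -mulrA; rewrite -mulr_sumr);
   rewrite big_delta_l).
under [RHS]eq_bigr => x' _ do rewrite margk_prod mulr_suml.
under [RHS]eq_bigr => x' _ do under eq_bigr => y0 _ do rewrite mulr_suml.
rewrite [RHS]exchange_big /=; apply: eq_bigr => y' _.
rewrite [RHS]exchange_big /=; apply: eq_bigr => g' _.
rewrite /glue1 /= mulr_suml; apply: eq_bigr => x' _.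
by rewrite !Psi_prod; ring.
Qed.

Lemma margYG_comm : opmx margYG *m lift (opmx margk) = lift (opmx margk) *m opmx margYG.
Proof.
rewrite liftmx_opmx.
apply: (liftk_comm (site1_glue eK) (rest1_glue eK) (glue1K e'K)
  (F := fun u w => (u == w)%:R) margYG_factor) => u w.
by rewrite big_delta_l big_delta_r.
Qed.

End ProductState.

Section Combine.
Variables (R : realType) (T X Y Z : finType).
Variables (e : X -> Y -> Z -> T) (e' : T -> X * Y * Z).
Hypotheses (eK : forall x y z, e' (e x y z) = (x, y, z))
  (e'K : forall t, e (e' t).1.1 (e' t).1.2 (e' t).2 = t).
Local Notation C := R[i].
Variable Psi : T -> C.
Hypothesis Psi_unit : \sum_t Psi t * Num.conj (Psi t) = 1.
Local Notation Phi := (fun x y z => Psi (e x y z)).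
Local Notation liftX := (liftmx (site1 e') (rest1 e')).
Local Notation liftY := (liftmx (site1 (swap12' e')) (rest1 (swap12' e'))).
Local Notation margX := (marg1 Phi).
Local Notation margY := (marg1 (fun y x z => Phi x y z)).

(* If [MA] acts on [Psi] like the marginal of [X] and [MB] like that of [Y],
   then so do their powers, and the expectation is [powR_expect]. *)
Theorem expect_mxpowR_gt0 (MA MB : 'M[C]_#|T|) alpha beta :
  (exists Ud, psd_spectral MA Ud) -> (exists Ud, psd_spectral MB Ud) ->
  MA *m vecmx Psi = liftX margX *m vecmx Psi -> MA *m liftX margX = liftX margX *m MA ->
  MB *m vecmx Psi = liftY margY *m vecmx Psi -> MB *m liftY margY = liftY margY *m MB ->
  0 < expect Psi (mxpowR MA alpha *m mxpowR MB beta).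
Proof.
move=> hA hB actA commA actB commB.
have [[U mu] sX] := marg1_psd_spectral Phi.
have [[V nu] sY] := marg1_psd_spectral (fun y x z => Phi x y z).
have powA := mxpowR_mulv_liftmx (site1_glue eK) (rest1_glue eK) (glue1K e'K) alpha hA sX actA commA.
have powB := mxpowR_mulv_liftmx (site1_glue (swap12K eK)) (rest1_glue (swap12K eK))
  (glue1K (swap12'K e'K)) beta hB sY actB commB.
have Phi_unit : \sum_x \sum_y \sum_z Phi x y z * Num.conj (Phi x y z) = 1.
  by rewrite -Psi_unit (big_tripartition eK e'K).
suff -> : expect Psi (mxpowR MA alpha *m mxpowR MB beta) = powR_expect Phi U mu V nu alpha beta.
  exact: (powR_expect_gt0 (Phi := fun x y z => Psi (e x y z)) Phi_unit sX sY).
rewrite /expect -adjmx_mxpowR mulmxA -adjmx_mul -mulmxA powA powB.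
rewrite /liftmx !opmx_vecmx dotmx_vecmx (big_tripartition eK e'K).
apply: eq_bigr => x _; apply: eq_bigr => y _; apply: eq_bigr => z _.
rewrite (kapp_liftk (site1_glue eK) (rest1_glue eK) (glue1K e'K)).
rewrite (kapp_liftk (site1_glue (swap12K eK)) (rest1_glue (swap12K eK)) (glue1K (swap12'K e'K))).
by rewrite /site1 /rest1 /glue1 /swap12' /swap12 !eK.
Qed.

End Combine.

Section ProductExpect.
Variables (R : realType) (T X Y F G : finType).
Variables (e : X -> Y -> F * G -> T) (e' : T -> X * Y * (F * G)).
Hypotheses (eK : forall x y z, e' (e x y z) = (x, y, z))
  (e'K : forall t, e (e' t).1.1 (e' t).1.2 (e' t).2 = t).
Local Notation C := R[i].
Variables (Psi : T -> C) (psi : X -> Y -> G -> C) (phi : F -> C).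
Hypotheses (psi_unit : \sum_x \sum_y \sum_g psi x y g * Num.conj (psi x y g) = 1)
  (phi_unit : \sum_f phi f * Num.conj (phi f) = 1)
  (Psi_prod : forall x y f g, Psi (e x y (f, g)) = psi x y g * phi f).

Lemma product_unit : \sum_t Psi t * Num.conj (Psi t) = 1.
Proof.
rewrite (big_tripartition eK e'K) -psi_unit; apply: eq_bigr => x _; apply: eq_bigr => y _.
rewrite big_pair exchange_big /=; apply: eq_bigr => g _.
by under eq_bigr => f _ do rewrite Psi_prod; rewrite (big_phi phi_unit).
Qed.

Theorem product_expect_gt0 (MA MB : 'M[C]_#|T|) alpha beta :
  MA = opmx (margXF e e' Psi) \/ MA = opmx (margYG e e' Psi) ->
  MB = opmx (margXF (swap12 e) (swap12' e') Psi) \/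
    MB = opmx (margYG (swap12 e) (swap12' e') Psi) ->
  0 < expect Psi (mxpowR MA alpha *m mxpowR MB beta).
Proof.
have Psi_prodT y x f g : Psi (swap12 e y x (f, g)) = psi x y g * phi f by exact: Psi_prod.
have eTK := swap12K eK; have e'TK := swap12'K e'K.
move=> hA hB; apply: (expect_mxpowR_gt0 eK e'K product_unit).
- by case: hA => ->; apply: marg_kernel_psd_spectral.
- by case: hB => ->; apply: marg_kernel_psd_spectral.
- by case: hA => ->; [exact: (margXF_mulv eK e'K phi_unit Psi_prod)
                    | exact: (margYG_mulv eK e'K phi_unit Psi_prod)].
- by case: hA => ->; [exact: (margXF_comm eK e'K phi_unit Psi_prod)
                    | exact: (margYG_comm eK e'K Psi)].
- by case: hB => ->; [exact: (margXF_mulv eTK e'TK phi_unit Psi_prodT)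
                    | exact: (margYG_mulv eTK e'TK phi_unit Psi_prodT)].
- by case: hB => ->; [exact: (margXF_comm eTK e'TK phi_unit Psi_prodT)
                    | exact: (margYG_comm eTK e'TK Psi)].
Qed.

End ProductExpect.

Lemma unit_vecE (R : rcfType) (T : finType) (v : T -> R[i]) :
  unit_vec v -> \sum_t v t * Num.conj (v t) = 1.
Proof. by rewrite /unit_vec => <-; apply: eq_bigr => t _; rewrite normCK. Qed.

Lemma unit_vec3 (R : rcfType) (A B D : finType) (v : A * B * D -> R[i]) :
  unit_vec v -> \sum_a \sum_b \sum_d v (a, b, d) * Num.conj (v (a, b, d)) = 1.
Proof. by move/unit_vecE => <-; rewrite [RHS]big_pair [RHS]big_pair. Qed.

Section Cases.
Variables (R : realType) (a b c d : nat) (Psi : idx a b c d -> R[i]) (alpha beta : R).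
Local Notation C := R[i].
Local Notation E := (expect Psi (mxpowR (rhoAB Psi) alpha *m mxpowR (rhoBC Psi) beta)).

Lemma expect_gt0_phiA (psi : 'I_b * 'I_c * 'I_d -> C) (phi : 'I_a -> C) :
  unit_vec psi -> unit_vec phi -> (forall x y z w, Psi (x, y, z, w) = psi (y, z, w) * phi x) ->
  0 < E.
Proof.
move=> /unit_vec3 hpsi /unit_vecE hphi hPsi.
apply: (product_expect_gt0 (e := fun y w (p : 'I_a * 'I_c) => (p.1, y, p.2, w))
  (e' := fun t => (t.1.1.2, t.2, (t.1.1.1, t.1.2))) _ _ (psi := fun y w z => psi (y, z, w))
  (phi := phi)).
- by move=> ? ? [].
- by case=> [[[]]].
- by rewrite -hpsi; apply: eq_bigr => y _; rewrite exchange_big.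
- exact: hphi.
- by move=> *; exact: hPsi.
- left; apply: eq_opmx => -[[[x y] z] w] -[[[x' y'] z'] w'] /=.
  by rewrite /margXF /marg_kernel /= xpair_eqE andbC big_pair exchange_big.
- right; apply: eq_opmx => -[[[x y] z] w] -[[[x' y'] z'] w'] /=.
  by rewrite /margYG /marg_kernel /swap12 /= xpair_eqE andbC big_pair exchange_big.
Qed.

Lemma expect_gt0_phiB (psi : 'I_a * 'I_c * 'I_d -> C) (phi : 'I_b -> C) :
  unit_vec psi -> unit_vec phi -> (forall x y z w, Psi (x, y, z, w) = psi (x, z, w) * phi y) ->
  0 < E.
Proof.
move=> /unit_vec3 hpsi /unit_vecE hphi hPsi.
apply: (product_expect_gt0 (e := fun x z (p : 'I_b * 'I_d) => (x, p.1, z, p.2))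
  (e' := fun t => (t.1.1.1, t.1.2, (t.1.1.2, t.2))) _ _ (psi := fun x z w => psi (x, z, w))
  (phi := phi)).
- by move=> ? ? [].
- by case=> [[[]]].
- exact: hpsi.
- exact: hphi.
- by move=> *; exact: hPsi.
- left; apply: eq_opmx => -[[[x y] z] w] -[[[x' y'] z'] w'] /=.
  by rewrite /margXF /marg_kernel /= xpair_eqE big_pair.
- left; apply: eq_opmx => -[[[x y] z] w] -[[[x' y'] z'] w'] /=.
  by rewrite /margXF /marg_kernel /swap12 /= xpair_eqE big_pair.
Qed.

Lemma expect_gt0_phiC (psi : 'I_a * 'I_b * 'I_d -> C) (phi : 'I_c -> C) :
  unit_vec psi -> unit_vec phi -> (forall x y z w, Psi (x, y, z, w) = psi (x, y, w) * phi z) ->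
  0 < E.
Proof.
move=> /unit_vec3 hpsi /unit_vecE hphi hPsi.
apply: (product_expect_gt0 (e := fun w y (p : 'I_c * 'I_a) => (p.2, y, p.1, w))
  (e' := fun t => (t.2, t.1.1.2, (t.1.2, t.1.1.1))) _ _ (psi := fun w y x => psi (x, y, w))
  (phi := phi)).
- by move=> ? ? [].
- by case=> [[[]]].
- rewrite -hpsi; under [RHS]eq_bigr do rewrite exchange_big.
  by rewrite [RHS]exchange_big; apply: eq_bigr => w _; rewrite exchange_big.
- exact: hphi.
- by move=> *; exact: hPsi.
- right; apply: eq_opmx => -[[[x y] z] w] -[[[x' y'] z'] w'] /=.
  by rewrite /margYG /marg_kernel /= xpair_eqE andbC big_pair exchange_big.
- left; apply: eq_opmx => -[[[x y] z] w] -[[[x' y'] z'] w'] /=.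
  by rewrite /margXF /marg_kernel /swap12 /= xpair_eqE andbC big_pair exchange_big.
Qed.

Lemma expect_gt0_phiD (psi : 'I_a * 'I_b * 'I_c -> C) (phi : 'I_d -> C) :
  unit_vec psi -> unit_vec phi -> (forall x y z w, Psi (x, y, z, w) = psi (x, y, z) * phi w) ->
  0 < E.
Proof.
move=> /unit_vec3 hpsi /unit_vecE hphi hPsi.
apply: (product_expect_gt0 (e := fun z x (p : 'I_d * 'I_b) => (x, p.2, z, p.1))
  (e' := fun t => (t.1.2, t.1.1.1, (t.2, t.1.1.2))) _ _ (psi := fun z x y => psi (x, y, z))
  (phi := phi)).
- by move=> ? ? [].
- by case=> [[[]]].
- by rewrite -hpsi; under [RHS]eq_bigr do rewrite exchange_big; rewrite [RHS]exchange_big.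
- exact: hphi.
- by move=> *; exact: hPsi.
- right; apply: eq_opmx => -[[[x y] z] w] -[[[x' y'] z'] w'] /=.
  by rewrite /margYG /marg_kernel /= xpair_eqE big_pair.
- right; apply: eq_opmx => -[[[x y] z] w] -[[[x' y'] z'] w'] /=.
  by rewrite /margYG /marg_kernel /swap12 /= xpair_eqE big_pair.
Qed.

End Cases.

Theorem mainTheorem11 (R : realType) (a b c d : nat)
    (Psi : idx a b c d -> R[i]) :
  split_product Psi ->
  forall alpha beta : R, 0 < alpha -> 0 < beta ->
    0 < expect Psi (mxpowR (rhoAB Psi) alpha *m mxpowR (rhoBC Psi) beta) /\
    omega Psi alpha beta = 1.
Proof.
move=> hs alpha beta _ _.
have pos : 0 < expect Psi (mxpowR (rhoAB Psi) alpha *m mxpowR (rhoBC Psi) beta).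
  case: hs => [|[|[|]]] [psi [phi [hpsi [hphi hPsi]]]].
  - exact: (expect_gt0_phiA alpha beta hpsi hphi hPsi).
  - exact: (expect_gt0_phiB alpha beta hpsi hphi hPsi).
  - exact: (expect_gt0_phiC alpha beta hpsi hphi hPsi).
  - exact: (expect_gt0_phiD alpha beta hpsi hphi hPsi).
by split=> //; rewrite /omega gtr0_norm // divff // gt_eqF.
Qed.
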